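(* Assume $H_0$ satisfies TQO-2. Let $A\in\mathcal{S}(r)$ be any square with $r\le L^*$ and let $O_A$ be any operator acting on $A$ such that $O_AP=0$. Let $B\in\mathcal{S}(r+2)$ be the square that contains $A$ and all nearest neighbors of $A$. Then $O_AP_B=0$.
   Context: Let $\Lambda=\mathbb{Z}_L\times\mathbb{Z}_L$ (periodic boundary conditions), each site $u$ carrying a finite-dimensional Hilbert space $\mathcal{H}_u$, $\mathcal{H}=\bigotimes_u\mathcal{H}_u$. For $r\ge1$, $\mathcal{S}(r)$ is the set of all $r\times r$ square blocks of sites. An operator acts on $A$ if it is the identity outside $A$. $H_0=\sum_{A\in\mathcal{S}(2)}G_A$ with each $G_A$ acting on $A$, the $G_A$ pairwise commuting, $G_A\ge0$, $G_A^2\ge G_A$, and frustration-free: the ground subspace $P=\{\psi:G_A\psi=0\ \forall A\in\mathcal{S}(2)\}$ is nonzero; $P$ also denotes its orthogonal projector. $P_A$ is the projector onto the kernel of $G_A$, and for a square $B$, $P_B=\prod_{A\in\mathcal{S}(2),A\subseteq B}P_A$. There is a constant $c>0$ and an integer $L^*\ge cL$. TQO-2: for every square $A\in\mathcal{S}(r)$, $r\le L^*$, with $B\in\mathcal{S}(r+2)$ the square containing $A$ and all its nearest neighbors, the operators $\mathrm{Tr}_{\Lambda\setminus A}(P)$ and $\mathrm{Tr}_{\Lambda\setminus A}(P_B)$ have the same kernel. *)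

From HB Require Import structures.
From mathcomp Require Import all_boot all_order all_algebra.
Set Implicit Arguments.
Unset Strict Implicit.
Unset Printing Implicit Defensive.
Import Order.TTheory GRing.Theory Num.Theory.
Local Open Scope ring_scope.

Definition site (L : nat) : finType := ('I_L * 'I_L)%type.

Definition block (L : nat) (a1 a2 r : nat) : {set site L} :=
  [set u : site L | [exists i : 'I_r, exists j : 'I_r,
      (nat_of_ord u.1 == (a1 + i) %% L)%N && (nat_of_ord u.2 == (a2 + j) %% L)%N]].

Definition squares (L r : nat) : {set {set site L}} :=
  [set block L (nat_of_ord a.1) (nat_of_ord a.2) r | a : site L].

(* the (r+2) x (r+2) square containing block a r and all its nearest
   neighbours: corner shifted by -1 (mod L) *)
Definition nbhd_block (L : nat) (a1 a2 r : nat) : {set site L} :=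
  block L (a1 + L - 1) (a2 + L - 1) r.+2.

Section Ops.
Variables (C : numClosedFieldType) (L : nat) (d : site L -> nat).

(* product basis of H = (x)_u H_u, dim H_u = d u *)
Definition cfg : finType := {dffun forall u : site L, 'I_(d u)}.

(* product basis of (x)_{u in A} H_u *)
Definition cfgOn (A : {set site L}) : finType :=
  {dffun forall u : {u : site L | u \in A}, 'I_(d (sval u))}.

Definition restrict (A : {set site L}) (x : cfg) : cfgOn A :=
  finfun (fun u : {u : site L | u \in A} => x (sval u)).

Definition agree_out (A : {set site L}) (x y : cfg) : bool :=
  [forall u : site L, (u \notin A) ==> (x u == y u)].

(* operators on H, resp. on (x)_{u in A} H_u, as matrices in the product basis *)
Definition opH := 'M[C]_(#|{: cfg}|).
Definition opA (A : {set site L}) := 'M[C]_(#|{: cfgOn A}|).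
Definition vecH := 'cV[C]_(#|{: cfg}|).

Definition ent (M : opH) (x y : cfg) : C := M (enum_rank x) (enum_rank y).
Definition entA (A : {set site L}) (M : opA A) (a b : cfgOn A) : C :=
  M (enum_rank a) (enum_rank b).

(* O acts on A: O = o (x) Id_{Lambda \ A} for some operator o on A *)
Definition acts_on (A : {set site L}) (O : opH) : Prop :=
  exists o : opA A, forall x y : cfg,
    ent O x y = if agree_out A x y then entA o (restrict A x) (restrict A y)
                else 0.

(* partial trace Tr_{Lambda \ A} *)
Definition ptrace (A : {set site L}) (M : opH) : opA A :=
  \matrix_(i, j) \sum_(x : cfg | restrict A x == enum_val i)
                   \sum_(y : cfg | (restrict A y == enum_val j) && agree_out A x y)
                      ent M x y.

End Ops.

Definition adj (C : numClosedFieldType) (m n : nat) (M : 'M[C]_(m, n)) : 'M[C]_(n, m) :=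
  (map_mx Num.conj M)^T.

Definition psd (C : numClosedFieldType) (n : nat) (M : 'M[C]_n) : Prop :=
  forall v : 'cV[C]_n, 0 <= (adj v *m M *m v) ord0 ord0.

Definition orth_proj_onto (C : numClosedFieldType) (n : nat) (Q : 'M[C]_n)
    (S : 'cV[C]_n -> Prop) : Prop :=
  [/\ Q *m Q = Q, adj Q = Q & forall v : 'cV[C]_n, Q *m v = v <-> S v].

Definition same_kernel (C : numClosedFieldType) (n : nat) (X Y : 'M[C]_n) : Prop :=
  forall v : 'cV[C]_n, X *m v = 0 <-> Y *m v = 0.

(* P_B = product of P_A over A in S(2), A subset of B (the P_A commute) *)
Definition PB (C : numClosedFieldType) (L : nat) (d : site L -> nat)
    (PA : {set site L} -> opH C d) (B : {set site L}) : opH C d :=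
  \big[@mulmx C _ _ _ / 1%:M]_(A in squares L 2 | A \subset B) PA A.

(* Standing assumptions on H_0 = sum_{A in S(2)} G_A, with P the ground-space
   projector and PA A the projector onto ker G_A. *)
Definition standing_assumptions (C : numClosedFieldType) (L : nat)
    (d : site L -> nat) (G PA : {set site L} -> opH C d) (P : opH C d) : Prop :=
  (forall A, A \in squares L 2 -> acts_on A (G A)) /\
  (forall A A', A \in squares L 2 -> A' \in squares L 2 ->
                G A *m G A' = G A' *m G A) /\
  (forall A, A \in squares L 2 -> psd (G A)) /\
  (forall A, A \in squares L 2 -> psd (G A *m G A - G A)) /\
  (forall A, A \in squares L 2 ->
             orth_proj_onto (PA A) (fun v => G A *m v = 0)) /\
  orth_proj_onto P (fun v => forall A, A \in squares L 2 -> G A *m v = 0) /\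
  P != 0.

Definition TQO2 (C : numClosedFieldType) (L : nat) (d : site L -> nat)
    (PA : {set site L} -> opH C d) (P : opH C d) (Lstar : nat) : Prop :=
  forall (r : nat) (a : site L), (1 <= r <= Lstar)%N ->
    same_kernel (ptrace (block L a.1 a.2 r) P)
                (ptrace (block L a.1 a.2 r) (PB PA (nbhd_block L a.1 a.2 r))).

(* Write [rho] and [sigma] for the reductions of [P] and [P_B] to [A], and [o]
   for the operator on [A] with [O = o (x) Id].  From [O P = 0] one gets
   [o rho = 0], i.e. [rho o^* = 0] by self-adjointness; since [rho] and [sigma]
   have the same kernel, also [sigma o^* = 0].  As [P_B] is an orthogonal
   projector (the commuting [G_A] have commuting kernel projectors), the
   reduction of [(O P_B) (O P_B)^* = O P_B O^*] is [o sigma o^* = 0], and a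
   partial trace of [X X^*] vanishes only if [X = 0]. *)

From HB Require Import structures.
From mathcomp Require Import all_boot all_order all_algebra.
From mathcomp Require Import ring.
Import Order.TTheory GRing.Theory Num.Theory.
Local Open Scope ring_scope.
Set Implicit Arguments.
Unset Strict Implicit.

Section Adjoint.
Variable C : numClosedFieldType.
Implicit Types m n p : nat.

Lemma adjK m n (M : 'M[C]_(m, n)) : adj (adj M) = M.
Proof. by apply/matrixP => i j; rewrite /adj !mxE conjCK. Qed.

Lemma adj_mul m n p (M : 'M[C]_(m, n)) (N : 'M[C]_(n, p)) :
  adj (M *m N) = adj N *m adj M.
Proof. by rewrite /adj map_mxM trmx_mul. Qed.

Lemma adj0 m n : adj (0 : 'M[C]_(m, n)) = 0.
Proof. by apply/matrixP => i j; rewrite /adj !mxE rmorph0. Qed.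

Lemma adj1 n : adj (1%:M : 'M[C]_n) = 1%:M.
Proof. by apply/matrixP => i j; rewrite /adj !mxE rmorph_nat eq_sym. Qed.

Lemma adjD m n (M N : 'M[C]_(m, n)) : adj (M + N) = adj M + adj N.
Proof. by apply/matrixP => i j; rewrite /adj !mxE rmorphD. Qed.

Lemma adjZ m n (z : C) (M : 'M[C]_(m, n)) : adj (z *: M) = z^* *: adj M.
Proof. by apply/matrixP => i j; rewrite /adj !mxE rmorphM. Qed.

Lemma adj_delta n (i : 'I_n) : adj (delta_mx i 0 : 'cV[C]_n) = delta_mx 0 i.
Proof. by apply/matrixP => a b; rewrite /adj !mxE rmorph_nat andbC. Qed.

(* Over a complex field positivity forces self-adjointness: the diagonal values
   of the quadratic form at [e_i + e_j] and [e_i + 'i e_j] recover [M i j]. *)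
Lemma psd_adj n (M : 'M[C]_n) : psd M -> adj M = M.
Proof.
move=> psdM; pose e k : 'cV[C]_n := delta_mx k 0.
pose q (v : 'cV[C]_n) := (adj v *m M *m v) ord0 ord0.
have q_real (v : 'cV[C]_n) : (q v)^* = q v by exact: geC0_conj (psdM v).
have q_delta i j : \sum_k (adj (e i) *m M) ord0 k * e j k ord0 = M i j.
  transitivity ((adj (e i) *m M *m e j) ord0 ord0); first by rewrite mxE.
  by rewrite adj_delta -rowE -colE !mxE.
have q_sum i j z : q (e i + z *: e j) =
    M i i + z * M i j + z^* * M j i + z^* * z * M j j.
  rewrite /q adjD adjZ mulmxDl mulmxDl mulmxDr mulmxDr.
  by rewrite -!scalemxAl -!scalemxAr !mxE !q_delta; ring.
have diag_real k : (M k k)^* = M k k.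
  by have := q_real (e k); rewrite /q mxE q_delta.
apply/matrixP => i j; rewrite /adj !mxE.
have := q_real (e i + 1 *: e j); have := q_real (e i + 'i *: e j).
rewrite !q_sum !rmorphD !rmorphM /= !conjCK conjCi rmorph1 !mul1r !diag_real.
set a := M i i; set b := M j j; set g := M i j; set h := M j i => q1 q2.
have : (h^* - g) *+ 2 = 0.
  transitivity ((a + g^* + h^* + b) - (a + g + h + b)
    - 'i * ((a + - 'i * g^* + 'i * h^* + 'i * - 'i * b)
            - (a + 'i * g + - 'i * h + - 'i * 'i * b))
    + ('i ^+ 2 + 1) * (h^* - g^* - g + h)); first by ring.
  by rewrite q1 q2 !subrr sqrCi addNr mul0r mulr0 subr0 addr0.
by move/eqP; rewrite mulrn_eq0 /= subr_eq0 => /eqP.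
Qed.

Lemma mulmx_cVP n (X Y : 'M[C]_n) : (forall v : 'cV[C]_n, X *m v = Y *m v) -> X = Y.
Proof.
move=> XY; apply/matrixP => i j.
by have /(congr1 (fun v : 'cV[C]_n => v i 0)) := XY (delta_mx j 0); rewrite -!colE !mxE.
Qed.

Lemma same_kernel_mulmx n (X Y N : 'M[C]_n) : same_kernel X Y -> X *m N = 0 -> Y *m N = 0.
Proof.
move=> XY XN; apply/matrixP => i j.
have /XY YNj : X *m (N *m (delta_mx j 0 : 'cV[C]_n)) = 0 by rewrite mulmxA XN mul0mx.
by move: YNj; rewrite mulmxA -colE => /matrixP/(_ i 0); rewrite !mxE.
Qed.

Section OrthProj.
Variables (n : nat) (Q : 'M[C]_n) (S : 'cV[C]_n -> Prop).
Hypothesis projQ : orth_proj_onto Q S.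

Lemma orth_proj_adj : adj Q = Q.
Proof. by case: projQ. Qed.

Lemma orth_proj_idem : Q *m Q = Q.
Proof. by case: projQ. Qed.

Lemma orth_proj_id v : S v -> Q *m v = v.
Proof. by case: projQ => _ _ /(_ v)[]. Qed.

Lemma orth_proj_range v : S (Q *m v).
Proof. by case: projQ => QQ _ /(_ (Q *m v))[+ _]; apply; rewrite mulmxA QQ. Qed.

(* [Q G Q = G Q] by stability, and taking adjoints gives [Q G Q = Q G]. *)
Lemma orth_proj_comm_stable G :
  adj G = G -> (forall v, S v -> S (G *m v)) -> Q *m G = G *m Q.
Proof.
move=> adjG stableG.
have QGQ : Q *m G *m Q = G *m Q.
  apply: mulmx_cVP => v; rewrite -!mulmxA.
  exact/orth_proj_id/stableG/orth_proj_range.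
have := congr1 (@adj C n n) QGQ; rewrite !adj_mul adjG orth_proj_adj mulmxA => <-.
by rewrite QGQ.
Qed.

End OrthProj.

Lemma kernel_projs_commute n (G1 G2 Q1 Q2 : 'M[C]_n) :
  adj G2 = G2 -> G1 *m G2 = G2 *m G1 ->
  orth_proj_onto Q1 (fun v => G1 *m v = 0) ->
  orth_proj_onto Q2 (fun v => G2 *m v = 0) ->
  Q1 *m Q2 = Q2 *m Q1.
Proof.
move=> adjG2 G12 projQ1 projQ2.
have Q1G2 : Q1 *m G2 = G2 *m Q1.
  apply: (orth_proj_comm_stable projQ1 adjG2) => v G1v.
  by rewrite mulmxA G12 -mulmxA G1v mulmx0.
apply/esym/(orth_proj_comm_stable projQ2 (orth_proj_adj projQ1)) => v G2v.
by rewrite mulmxA -Q1G2 -mulmxA G2v mulmx0.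
Qed.

Lemma big_mul_commuting_projs n (I : Type) (r : seq I) (P : pred I)
    (Q : I -> 'M[C]_n) :
  (forall i, P i -> adj (Q i) = Q i /\ Q i *m Q i = Q i) ->
  (forall i j, P i -> P j -> Q i *m Q j = Q j *m Q i) ->
  let X := \big[@mulmx C _ _ _ / 1%:M]_(i <- r | P i) Q i in
  adj X = X /\ X *m X = X.
Proof.
move=> projQ commQ X.
pose inv Y := [/\ adj Y = Y, Y *m Y = Y & forall j, P j -> Q j *m Y = Y *m Q j].
suff [] : inv X by [].
apply: (big_rec inv) => [|i Y Pi [adjY idemY commY]].
  by split=> [|| j _]; rewrite ?adj1 ?mul1mx ?mulmx1.
have [adjQi idemQi] := projQ i Pi.
split=> [|| j Pj].
- by rewrite adj_mul adjY adjQi commY.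
- by rewrite mulmxA -(mulmxA _ Y) -commY // mulmxA idemQi -mulmxA idemY.
- by rewrite mulmxA (commQ j i) // -!mulmxA commY.
Qed.

End Adjoint.

Section EnumRankMatrix.
Variables (R : pzSemiRingType) (T : finType).
Local Notation "M @[ x , y ]" := (M (enum_rank x) (enum_rank y))
  (at level 10, format "M @[ x ,  y ]").

Lemma mulmx_enum_rank (M N : 'M[R]_#|{: T}|) x y :
  (M *m N)@[x, y] = \sum_z M@[x, z] * N@[z, y].
Proof.
rewrite mxE (reindex (fun i : 'I_#|{: T}| => enum_val i)) /=; last first.
  by exists (@enum_rank T) => i _; rewrite ?enum_valK ?enum_rankK.
by apply: eq_bigr => k _; rewrite enum_valK.
Qed.

Lemma matrix_enum_rankP (M N : 'M[R]_#|{: T}|) :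
  (forall x y, M@[x, y] = N@[x, y]) -> M = N.
Proof.
move=> MN; apply/matrixP => i j.
by have := MN (enum_val i) (enum_val j); rewrite !enum_valK.
Qed.

End EnumRankMatrix.

Section PartialTrace.
Variables (C : numClosedFieldType) (L : nat) (d : site L -> nat).
Local Notation cfg := (cfg d).
Local Notation opH := (opH C d).
Implicit Types (A : {set site L}) (x y z : cfg) (M N : opH).

Lemma ent_mul M N x y : ent (M *m N) x y = \sum_z ent M x z * ent N z y.
Proof. exact: mulmx_enum_rank. Qed.

Lemma entP M N : (forall x y, ent M x y = ent N x y) -> M = N.
Proof. exact: matrix_enum_rankP. Qed.

Lemma entA_mul A (M N : opA C d A) a b :
  entA (M *m N) a b = \sum_c entA M a c * entA N c b.
Proof. exact: mulmx_enum_rank. Qed.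

Lemma entAP A (M N : opA C d A) : (forall a b, entA M a b = entA N a b) -> M = N.
Proof. exact: matrix_enum_rankP. Qed.

Lemma ent_adj M x y : ent (adj M) x y = (ent M y x)^*.
Proof. by rewrite /ent /adj !mxE. Qed.

Lemma entA_adj A (M : opA C d A) a b : entA (adj M) a b = (entA M b a)^*.
Proof. by rewrite /entA /adj !mxE. Qed.

Lemma entA_ptrace A M a b :
  entA (ptrace A M) a b =
  \sum_(x | restrict A x == a)
     \sum_(y | (restrict A y == b) && agree_out A x y) ent M x y.
Proof. by rewrite /entA mxE !enum_rankK. Qed.

Lemma ptrace0 A : ptrace A (0 : opH) = 0.
Proof.
apply: entAP => a b; rewrite entA_ptrace /entA mxE big1 // => x _.
by rewrite big1 // => y _; rewrite /ent mxE.
Qed.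

Lemma agree_outxx A x : agree_out A x x.
Proof. by apply/forallP => u; apply/implyP. Qed.

Lemma agree_outC A x y : agree_out A x y = agree_out A y x.
Proof.
by apply/forallP/forallP => xy u; apply/implyP => uA; rewrite eq_sym (implyP (xy u)).
Qed.

Lemma agree_out_trans A x y z :
  agree_out A x y -> agree_out A y z -> agree_out A x z.
Proof.
move=> /forallP xy /forallP yz; apply/forallP => u; apply/implyP => uA.
by rewrite (eqP (implyP (xy u) uA)) (implyP (yz u) uA).
Qed.

Lemma agree_out_restrict_inj A x y :
  agree_out A x y -> restrict A x = restrict A y -> x = y.
Proof.
move=> /forallP xy rxy; apply/ffunP => u; have [uA | uA] := boolP (u \in A).
  by have := congr1 (fun f : cfgOn d A => f (exist _ u uA)) rxy; rewrite !ffunE.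
by rewrite (eqP (implyP (xy u) uA)).
Qed.

(* The configuration equal to [a] on [A] and to [z] off [A]. *)
Definition glue A (a : cfgOn d A) z : cfg :=
  [ffun u => (if u \in A as b return (u \in A) = b -> 'I_(d u)
              then fun uA => a (exist _ u uA) else fun=> z u) (erefl _)].
Arguments glue : clear implicits.

Lemma restrict_glue A a z : restrict A (glue A a z) = a.
Proof.
apply/ffunP => -[u uA]; rewrite !ffunE /=.
move: (erefl (u \in A)); rewrite {2 3}uA => uA'.
by rewrite (bool_irrelevance uA' uA).
Qed.

Lemma agree_out_glue A a z : agree_out A (glue A a z) z.
Proof.
apply/forallP => u; apply/implyP => uA; rewrite ffunE /=.
by move: (erefl (u \in A)); rewrite {2 3}(negbTE uA).
Qed.

Lemma glueP A a z x : (restrict A x == a) && agree_out A x z = (x == glue A a z).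
Proof.
apply/idP/eqP => [/andP[/eqP rx xz] | ->]; last first.
  by rewrite restrict_glue eqxx agree_out_glue.
apply: (@agree_out_restrict_inj A); last by rewrite restrict_glue.
by apply: agree_out_trans xz _; rewrite agree_outC agree_out_glue.
Qed.

Definition extend_op A (o : opA C d A) : opH :=
  \matrix_(i, j) let x := enum_val i in let y := enum_val j in
    if agree_out A x y then entA o (restrict A x) (restrict A y) else 0.

Lemma ent_extend_op A (o : opA C d A) x y :
  ent (extend_op o) x y =
  if agree_out A x y then entA o (restrict A x) (restrict A y) else 0.
Proof. by rewrite /ent mxE !enum_rankK. Qed.

Lemma acts_onP A O : acts_on A O -> exists o : opA C d A, O = extend_op o.
Proof. by case=> o Oo; exists o; apply: entP => x y; rewrite Oo ent_extend_op. Qed.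

Lemma adj_extend_op A (o : opA C d A) : adj (extend_op o) = extend_op (adj o).
Proof.
apply: entP => x y; rewrite ent_adj !ent_extend_op agree_outC.
by case: ifP; rewrite ?entA_adj ?rmorph0.
Qed.

Lemma ptrace_adj A M : ptrace A (adj M) = adj (ptrace A M).
Proof.
apply: entAP => a b; rewrite entA_adj !entA_ptrace rmorph_sum.
under [RHS]eq_bigr do rewrite rmorph_sum.
rewrite [RHS](exchange_big_dep (fun y : cfg => restrict A y == a)) /=; last first.
  by move=> x y _ /andP[].
apply: eq_bigr => y ry; apply: eq_big => [x|x _]; first by rewrite ry agree_outC.
by rewrite ent_adj.
Qed.

(* The sum over [x] restricting to [a] and agreeing with [z] off [A] has the
   single term [x = glue A a z]. *)
Lemma ptrace_extend_mull A (o : opA C d A) M :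
  ptrace A (extend_op o *m M) = o *m ptrace A M.
Proof.
apply: entAP => a b; rewrite entA_ptrace entA_mul.
transitivity (\sum_z \sum_(y | (restrict A y == b) && agree_out A z y)
                 entA o a (restrict A z) * ent M z y); last first.
  rewrite (partition_big (restrict A) predT) //=.
  apply: eq_bigr => c _; rewrite entA_ptrace mulr_sumr.
  by apply: eq_bigr => z /eqP ->; rewrite mulr_sumr.
transitivity (\sum_(x | restrict A x == a) \sum_y \sum_z
   (if agree_out A x z then
      (if (restrict A y == b) && agree_out A x y
       then entA o a (restrict A z) * ent M z y else 0) else 0)).
  apply: eq_bigr => x /eqP rx; rewrite big_mkcond /=; apply: eq_bigr => y _.
  case: ifP => yb; last by rewrite big1 // => z _; case: ifP.
  rewrite ent_mul; apply: eq_bigr => z _; rewrite ent_extend_op rx.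
  by case: ifP; rewrite ?mul0r.
rewrite exchange_big /= (eq_bigr _ (fun y _ => exchange_big _ _ _ _ _ _)) /=.
rewrite exchange_big /=; apply: eq_bigr => z _; rewrite [RHS]big_mkcond.
apply: eq_bigr => y _ /=; rewrite -big_mkcondr /=.
rewrite (big_pred1 (glue A a z)) => [|x]; last by rewrite /= glueP.
have -> : agree_out A (glue A a z) y = agree_out A z y.
  apply/idP/idP => [|zy]; last exact: agree_out_trans (agree_out_glue _ _) zy.
  by apply: agree_out_trans; rewrite agree_outC agree_out_glue.
by [].
Qed.

Lemma ptrace_extend_mulr A (o : opA C d A) M :
  ptrace A (M *m extend_op o) = ptrace A M *m o.
Proof.
rewrite -[M *m _]adjK adj_mul adj_extend_op ptrace_adj ptrace_extend_mull.
by rewrite ptrace_adj adj_mul !adjK.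
Qed.

(* The diagonal entries of [ptrace A (X *m adj X)] are sums of [`|X x w|^2]. *)
Lemma ptrace_mul_adj_eq0 A (X : opH) : ptrace A (X *m adj X) = 0 -> X = 0.
Proof.
move=> XX0; apply: entP => x w.
have := congr1 (fun N : opA C d A => entA N (restrict A x) (restrict A x)) XX0.
rewrite /= entA_ptrace /entA mxE.
have diag x' : restrict A x' == restrict A x ->
   \sum_(y | (restrict A y == restrict A x) && agree_out A x' y) ent (X *m adj X) x' y
   = \sum_v `|ent X x' v| ^+ 2.
  move=> /eqP rx'; rewrite (big_pred1 x') => [|y]; last first.
    apply/andP/eqP => [[/eqP ry x'y] | ->]; last by rewrite rx' agree_outxx.
    by apply/esym/(agree_out_restrict_inj x'y); rewrite ry rx'.
  by rewrite ent_mul; apply: eq_bigr => v _; rewrite ent_adj normCK.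
rewrite (eq_bigr _ diag) => /eqP; rewrite psumr_eq0 => [|x' _]; last first.
  by apply: sumr_ge0 => v _; apply: exprn_ge0.
move=> /allP /(_ x); rewrite mem_index_enum eqxx => /(_ isT) /implyP /(_ isT).
rewrite psumr_eq0 => [|v _]; last exact: exprn_ge0.
move=> /allP /(_ w); rewrite mem_index_enum => /(_ isT).
by rewrite sqrf_eq0 normr_eq0 /ent mxE => /eqP.
Qed.

End PartialTrace.

Lemma extend_op_mul_eq0 (C : numClosedFieldType) (L : nat) (d : site L -> nat)
    (A : {set site L}) (o : opA C d A) (Q Q' : opH C d) :
  adj Q = Q -> adj Q' = Q' -> Q' *m Q' = Q' ->
  same_kernel (ptrace A Q) (ptrace A Q') ->
  extend_op o *m Q = 0 -> extend_op o *m Q' = 0.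
Proof.
move=> adjQ adjQ' idemQ' QQ' oQ.
have o_rho : o *m ptrace A Q = 0 by rewrite -ptrace_extend_mull oQ ptrace0.
have rho_o : ptrace A Q *m adj o = 0.
  by rewrite -adjQ ptrace_adj -adj_mul o_rho adj0.
have sigma_o := same_kernel_mulmx QQ' rho_o.
apply: (@ptrace_mul_adj_eq0 _ _ _ A).
rewrite adj_mul adjQ' adj_extend_op mulmxA -(mulmxA _ Q' Q') idemQ'.
by rewrite ptrace_extend_mulr ptrace_extend_mull -mulmxA sigma_o mulmx0.
Qed.

Lemma PB_orth_proj (C : numClosedFieldType) (L : nat) (d : site L -> nat)
    (G PA : {set site L} -> opH C d) (P : opH C d) (B : {set site L}) :
  standing_assumptions G PA P ->
  adj (PB PA B) = PB PA B /\ PB PA B *m PB PA B = PB PA B.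
Proof.
move=> [_ [commG [psdG [_ [projPA _]]]]].
apply: big_mul_commuting_projs => [A /andP[A2 _] | A A' /andP[A2 _] /andP[A2' _]].
  exact: conj (orth_proj_adj (projPA A A2)) (orth_proj_idem (projPA A A2)).
exact: kernel_projs_commute (psd_adj (psdG A' A2')) (commG A A' A2 A2')
                            (projPA A A2) (projPA A' A2').
Qed.

(* The hypotheses on [c] only express [L^* >= c L]; the argument works for
   every [r] in the range where TQO-2 is assumed. *)
Theorem corollary1 (C : numClosedFieldType) (L : nat) (d : site L -> nat)
    (G PA : {set site L} -> opH C d) (P : opH C d) (c : C) (Lstar : nat) :
  standing_assumptions G PA P ->
  0 < c -> c * L%:R <= Lstar%:R ->
  TQO2 PA P Lstar ->
  forall (r : nat) (a : site L) (O : opH C d),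
    (1 <= r <= Lstar)%N ->
    acts_on (block L a.1 a.2 r) O ->
    O *m P = 0 ->
    O *m PB PA (nbhd_block L a.1 a.2 r) = 0.
Proof.
move=> SA _ _ tqo r a O r_range /acts_onP[o ->] oP.
have [_ [_ [_ [_ [_ [projP _]]]]]] := SA.
have [adjPB idemPB] := PB_orth_proj (nbhd_block L a.1 a.2 r) SA.
exact: extend_op_mul_eq0 (orth_proj_adj projP) adjPB idemPB (tqo r a r_range) oP.
Qed.
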